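(* Let $g$ be an $n$-person no-sink WTT game form satisfying the standing assumptions below. Then $g$ contains no $1$-box.
   Context: Let $X_1,\dots,X_n$ and $A$ be finite nonempty sets. An $n$-person game form is a map $g: X_1\times\cdots\times X_n\to A$; elements of $X=X_1\times\cdots\times X_n$ are strategy profiles. For a direction $i\in[n]$ write $X_{-i}=\prod_{t\neq i}X_t$, and for $s\in X_i$, $y\in X_{-i}$ write $(s,y)$ for the profile with $i$-th coordinate $s$ and other coordinates $y$. The hyperplane perpendicular to direction $i$ at $s\in X_i$ is $H_s=\{x\in X: x_i=s\}$; for a profile $x$ write $H_i^x$ for the hyperplane perpendicular to direction $i$ containing $x$. $g$ is weakly totally tight (WTT) if for every $i\in[n]$, all $s\neq s'$ in $X_i$ and all $y\neq y'$ in $X_{-i}$, at least one of $g(s,y)=g(s,y')$, $g(s,y)=g(s',y)$, $g(s',y')=g(s',y)$, $g(s',y')=g(s,y')$ holds. A set $S\subseteq X$ is a constant region if there is $c\in A$ with $g(x)=c$ for all $x\in S$. For distinct $j,k\in X_i$, $H_j^{\neq}(k)=\{(j,y): y\in X_{-i},\ g(j,y)\neq g(k,y)\}$. We write $H_j\stackrel{c}{\longrightarrow}H_k$ if $g(x)=c$ for all $x\in H_j^{\neq}(k)$, and $H_j\stackrel{c}{\Longrightarrow}H_k$ if $H_j\stackrel{c}{\longrightarrow}H_k$ and there is no outcome $d$ with $H_k\stackrel{d}{\longrightarrow}H_j$. If there exist $k\in X_i\setminus\{j\}$ and $c$ with $H_j\stackrel{c}{\Longrightarrow}H_k$, $c$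 is called the proper outcome of $H_j$ (for WTT $g$ it does not depend on $k$). We say an outcome $a$ is not the proper outcome of a hyperplane $H$ if $H$ has no proper outcome or its proper outcome differs from $a$. $H_j$ is a sink hyperplane if for every $k\in X_i\setminus\{j\}$ there is an outcome $c_k$ with $H_k\stackrel{c_k}{\longrightarrow}H_j$; $g$ is no-sink if there is no sink hyperplane in any direction. A WTT no-sink $g$ contains a $k$-box if there are profiles $x,y$ such that: $g(x)\neq g(y)$; $x$ and $y$ differ in exactly $k$ coordinates $i_1,\dots,i_k$; and for every $1\le t\le k$, $g(x)$ is not the proper outcome of $H_{i_t}^x$ and $g(y)$ is not the proper outcome of $H_{i_t}^y$. Standing assumptions: no hyperplane of $g$ is a constant region, and for every $i$ and distinct $j,k\in X_i$ there is $y\in X_{-i}$ with $g(j,y)\neq g(k,y)$. *)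

From mathcomp Require Import all_boot.
Unset Printing Implicit Defensive.

Section GameForm.
Variables (n : nat) (X : 'I_n -> finType) (A : finType).

Definition profile := forall i : 'I_n, X i.

(* (s, y): the profile y with its i-th coordinate replaced by s.
   A point y of X_{-i} is represented by any profile (its i-th coordinate
   is ignored by [upd y i s]). *)
Definition upd (y : profile) (i : 'I_n) (s : X i) : profile :=
  fun j => match @eqP _ i j with
           | ReflectT e => eq_rect i X s j e
           | ReflectF _ => y j
           end.

Definition differ_off (i : 'I_n) (y y' : profile) : Prop :=
  exists t : 'I_n, t != i /\ y t <> y' t.

Variable g : profile -> A.

Definition WTT : Prop :=
  forall (i : 'I_n) (s s' : X i) (y y' : profile),
    s != s' -> differ_off i y y' ->
    g (upd y i s) = g (upd y' i s) \/
    g (upd y i s) = g (upd y i s') \/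
    g (upd y' i s') = g (upd y i s') \/
    g (upd y' i s') = g (upd y' i s).

Definition arrow (i : 'I_n) (j k : X i) (c : A) : Prop :=
  forall y : profile, g (upd y i j) <> g (upd y i k) -> g (upd y i j) = c.

Definition darrow (i : 'I_n) (j k : X i) (c : A) : Prop :=
  arrow i j k c /\ ~ (exists d : A, arrow i k j d).

Definition proper_outcome (i : 'I_n) (j : X i) (c : A) : Prop :=
  exists k : X i, k != j /\ darrow i j k c.

Definition sink (i : 'I_n) (j : X i) : Prop :=
  forall k : X i, k != j -> exists c : A, arrow i k j c.

Definition no_sink : Prop := forall (i : 'I_n) (j : X i), ~ sink i j.

(* standing assumption 1: no hyperplane is a constant region *)
Definition no_constant_hyperplane : Prop :=
  forall (i : 'I_n) (s : X i),
    ~ (exists c : A, forall x : profile, x i = s -> g x = c).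

(* standing assumption 2: distinct parallel hyperplanes are distinguished *)
Definition parallel_distinguished : Prop :=
  forall (i : 'I_n) (j k : X i), j != k ->
    exists y : profile, g (upd y i j) <> g (upd y i k).

(* g contains a k-box: profiles x, y with g x <> g y, differing exactly on
   a set D of k coordinates, and for each t in D, g x is not the proper
   outcome of H_t^x (= H_{x t} in direction t), and likewise for y. *)
Definition contains_box (k : nat) : Prop :=
  exists (x y : profile) (D : {set 'I_n}),
    [/\ g x <> g y,
        #|D| = k,
        (forall t : 'I_n, t \in D <-> x t <> y t) &
        (forall t : 'I_n, t \in D ->
            ~ proper_outcome t (x t) (g x) /\ ~ proper_outcome t (y t) (g y))].

End GameForm.

Arguments profile {n} X.
Arguments upd {n X} y i s.
Arguments differ_off {n X} i y y'.
Arguments WTT {n X A} g.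
Arguments arrow {n X A} g i j k c.
Arguments darrow {n X A} g i j k c.
Arguments proper_outcome {n X A} g i j c.
Arguments sink {n X A} g i j.
Arguments no_sink {n X A} g.
Arguments no_constant_hyperplane {n X A} g.
Arguments parallel_distinguished {n X A} g.
Arguments contains_box {n X A} g k.

From mathcomp Require Import all_boot.
From Stdlib Require Import Classical FunctionalExtensionality.

Set Implicit Arguments.
Unset Strict Implicit.

(* Let x, y form a 1-box in direction i, with j = x_i, k = y_i, a = g x,
   b = g y.  In a WTT form, of two distinct parallel hyperplanes one always
   points to the other; since neither a nor b is proper, both arrows
   H_j -a-> H_k and H_k -b-> H_j hold.  No-sink gives a hyperplane H_m that
   does not point to H_j; then H_j ==b==> H_m, and H_m agrees with H_j, H_k
   (there equal to b) wherever H_j and H_m differ.  Symmetrically there is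
   H_m' not pointing to H_k.  Comparing H_m and H_m' with WTT forces
   H_m' -b-> H_k, a contradiction. *)

Section Update.
Variables (n : nat) (X : 'I_n -> finType).

Lemma upd_id (y : profile X) i : upd y i (y i) = y.
Proof.
apply: functional_extensionality_dep => t; rewrite /upd.
by case: eqP => // e; case: _ / e.
Qed.

Lemma upd_eq_off (y y' : profile X) i s :
  (forall t, t != i -> y t = y' t) -> upd y i s = upd y' i s.
Proof.
move=> eq_off; apply: functional_extensionality_dep => t; rewrite /upd.
case: eqP => // ne; apply: eq_off; apply/eqP => e; apply: ne; by rewrite e.
Qed.

End Update.

Section Direction.
Variables (n : nat) (X : 'I_n -> finType) (A : finType).
Variable g : profile X -> A.
Hypothesis hWTT : WTT g.
Variable i : 'I_n.
Local Notation f s y := (g (upd y i s)).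

(* The condition [differ_off] of [WTT] can be dropped: when y, y' agree off
   coordinate i the first alternative holds. *)
Lemma WTT_upd (s s' : X i) y y' : s != s' ->
  f s y = f s y' \/ f s y = f s' y \/ f s' y' = f s' y \/ f s' y' = f s y'.
Proof.
move=> ss'; case: (classic (differ_off i y y')) => [|same]; first exact: hWTT.
left; congr g; apply: upd_eq_off => t ti.
by apply: NNPP => ne; apply: same; exists t.
Qed.

Lemma not_arrow_witness j k c :
  ~ arrow g i j k c -> exists y, f j y <> f k y /\ f j y <> c.
Proof.
move=> nar; apply: NNPP => none; apply: nar => y fjk.
by apply: NNPP => fjc; apply: none; exists y.
Qed.

Lemma arrow_or_converse (a0 : A) j k : j != k ->
  (exists c, arrow g i j k c) \/ (exists d, arrow g i k j d).
Proof.
move=> jk; apply: NNPP => /not_or_and [njk nkj].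
have njk' c : ~ arrow g i j k c by move=> h; apply: njk; exists c.
have nkj' d : ~ arrow g i k j d by move=> h; apply: nkj; exists d.
have [y0 [y0D _]] := not_arrow_witness (njk' a0).
have [y1 [y1D y1n]] := not_arrow_witness (njk' (f j y0)).
have [w [wD wn]] := not_arrow_witness (nkj' (f k y0)).
have fky1 : f k y1 = f k y0.
  case: (WTT_upd y0 y1 jk) => [e|[e|[e|e]]] //;
    by [move: y1n; rewrite e | move: y1D; rewrite e].
have fjw : f j w = f j y0.
  case: (WTT_upd w y0 jk) => [e|[e|[e|e]]] //;
    by [move: wD; rewrite e | move: wn; rewrite e | move: y0D; rewrite e].
case: (WTT_upd w y1 jk) => [e|[e|[e|e]]].
- by apply: y1n; rewrite -e.
- by apply: wD; rewrite e.
- by apply: wn; rewrite -fky1 e.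
- by apply: y1D; rewrite e.
Qed.

Lemma converse_arrow_of_not_proper j k c :
  k != j -> arrow g i j k c -> ~ proper_outcome g i j c ->
  exists d, arrow g i k j d.
Proof.
move=> kj ajk np; apply: NNPP => nkj; apply: np.
by exists k; split => //; split.
Qed.

Lemma box_arrows j k a b z :
  j != k -> f j z = a -> f k z = b -> a <> b ->
  ~ proper_outcome g i j a -> ~ proper_outcome g i k b ->
  arrow g i j k a /\ arrow g i k j b.
Proof.
move=> jk fjz fkz ab npj npk.
have fjkz : f j z <> f k z by rewrite fjz fkz.
have kj : k != j by rewrite eq_sym.
have value_jk c : arrow g i j k c -> c = a.
  by move=> ajk; rewrite -fjz (ajk z fjkz).
have value_kj d : arrow g i k j d -> d = b.
  by move=> akj; rewrite -fkz (akj z (nesym fjkz)).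
case: (arrow_or_converse a jk) => [[c ajk]|[d akj]].
- have [d akj] : exists d, arrow g i k j d.
    by apply: (converse_arrow_of_not_proper kj ajk); rewrite (value_jk _ ajk).
  by rewrite -(value_jk _ ajk) -(value_kj _ akj).
- have [c ajk] : exists c, arrow g i j k c.
    by apply: (converse_arrow_of_not_proper jk akj); rewrite (value_kj _ akj).
  by rewrite -(value_jk _ ajk) -(value_kj _ akj).
Qed.

Hypothesis hns : no_sink g.

Lemma escape_hyperplane j k a b z :
  arrow g i j k a -> arrow g i k j b -> f j z = a -> f k z = b -> a <> b ->
  ~ proper_outcome g i j a ->
  exists m : X i, [/\ ~ (exists c, arrow g i m j c), f m z = a &
    forall y, f j y <> f m y -> f j y = b /\ f k y = b].
Proof.
move=> ajk akj fjz fkz ab np.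
have [m nmj] : exists m, ~ exists c, arrow g i m j c.
  apply: NNPP => no_m; apply: (@hns i j) => m _.
  by apply: NNPP => nmj; apply: no_m; exists m.
have mj : m != j by apply/eqP => e; apply: nmj; exists a => y; rewrite e.
have jm : j != m by rewrite eq_sym.
have [[c ajm]|[d amj]] := arrow_or_converse a jm; last by case: nmj; exists d.
(* H_j ==c==> H_m, so c is a proper outcome of H_j, hence c <> a. *)
have ca : c <> a by move=> e; apply: np; exists m; rewrite -e.
have fmz : f m z = a.
  apply: NNPP => ne; apply: ca; rewrite -fjz (ajm z) // fjz; exact: nesym.
have jm_diff y : f j y <> f m y -> f j y = c /\ f k y = c.
  move=> hy; have fjy := ajm y hy; split => //.
  apply: NNPP => ne; apply: ca; rewrite -fjy (ajk y) // fjy; exact: nesym.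
have km : k != m by apply/eqP => e; apply: nmj; exists b; rewrite -e.
suff cb : c = b.
  by exists m; split => // y hy; rewrite -cb; exact: jm_diff.
apply: NNPP => cb; apply: nmj; exists a => y hmy.
have [fjy fky] := jm_diff y (nesym hmy).
case: (WTT_upd z y km) => [e|[e|[e|e]]].
- by case: cb; rewrite -fkz e fky.
- by case: ab; rewrite -fmz -fkz e.
- by rewrite e fmz.
- by case: hmy; rewrite e fjy fky.
Qed.

Lemma no_improper_pair j k a b z :
  j != k -> f j z = a -> f k z = b -> a <> b ->
  ~ proper_outcome g i j a -> ~ proper_outcome g i k b -> False.
Proof.
move=> jk fjz fkz ab npj npk.
have [ajk akj] := box_arrows jk fjz fkz ab npj npk.
have [m [nmj fmz jm_diff]] := escape_hyperplane ajk akj fjz fkz ab npj.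
have [m' [nm'k fm'z km'_diff]] :=
  escape_hyperplane akj ajk fkz fjz (nesym ab) npk.
have mm' : m != m' by apply/eqP => e; apply: ab; rewrite -fmz -fm'z e.
have [y1 [y1D y1n]] : exists y1, f m y1 <> f j y1 /\ f m y1 <> a.
  by apply: not_arrow_witness => amj; apply: nmj; exists a.
have [fjy1 fky1] := jm_diff y1 (nesym y1D).
have fm'y1 : f m' y1 = b.
  apply: NNPP => ne; have [fky1' _] : f k y1 = a /\ f j y1 = a.
    by apply: km'_diff; rewrite fky1; exact: nesym.
  by apply: ab; rewrite -fky1' fky1.
apply: nm'k; exists b => w hw.
have [fkw fjw] := km'_diff w (nesym hw).
have fmw : f m w = a.
  apply: NNPP => ne; have [fjw' _] : f j w = b /\ f k w = b.
    by apply: jm_diff; rewrite fjw; exact: nesym.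
  by apply: ab; rewrite -fjw' fjw.
case: (WTT_upd y1 w mm') => [e|[e|[e|e]]].
- by case: y1n; rewrite e fmw.
- by case: y1D; rewrite e fm'y1 fjy1.
- by rewrite e fm'y1.
- by case: hw; rewrite e fmw fkw.
Qed.

End Direction.

Theorem mainTheorem7 (n : nat) (X : 'I_n -> finType) (A : finType)
    (g : profile X -> A)
    (hX : forall i : 'I_n, 0 < #|X i|) (hA : 0 < #|A|)
    (hWTT : WTT g) (hnosink : no_sink g)
    (hconst : no_constant_hyperplane g)
    (hdist : parallel_distinguished g) :
  ~ contains_box g 1.
Proof.
move=> [x [y [D [gxy /eqP/cards1P [i Di] hD hP]]]].
have iD : i \in D by rewrite Di set11.
have [npx npy] := hP i iD.
have xy_i : x i != y i by apply/eqP; apply/(hD i).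
have fx : g (upd x i (x i)) = g x by rewrite upd_id.
have fy : g (upd x i (y i)) = g y.
  rewrite -[in RHS](upd_id y i); congr g; apply: upd_eq_off => t ti.
  by apply: NNPP => /(hD t); rewrite Di in_set1 (negbTE ti).
exact: (no_improper_pair hWTT hnosink xy_i fx fy gxy npx npy).
Qed.
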